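(* Let $a_1,a_2\ge0$ and $D=D_{a_1,a_2}$. (a) Let $S_1:D_1\to\mathbb{Z}_{\ge0}$. For any $h,h'\in D_1$, the local shadows $\operatorname{sh}(h;S_1)$ and $\operatorname{sh}(h';S_1)$ are either disjoint or one is contained in the other. (b) Let $S_2:D_2\to\mathbb{Z}_{\ge0}$. For any $v,v'\in D_2$, the local shadows $\operatorname{sh}(v;S_2)$ and $\operatorname{sh}(v';S_2)$ are either disjoint or one is contained in the other.
   Context: Maximal Dyck path: $D=D_{a_1,a_2}$ is the lattice path of unit East and North steps from $(0,0)$ to $(a_1,a_2)$ staying weakly below the diagonal of $[0,a_1]\times[0,a_2]$ and closest to it. $D_1$, $D_2$ are its sets of horizontal and vertical edges. Identify $(0,0)\equiv(a_1,a_2)$ so $D$ is a cyclic sequence of edges; for edges $e,e'$, $ee'$ is the subpath from $e$ to $e'$ inclusive following $D$ cyclically, $ee$ is $e$ alone, and $(ee')_1,(ee')_2$ are its horizontal and vertical edges. Local shadows: for $h\in D_1$, $\operatorname{sh}(h;S_1)=(he)_2$ where $he$ is the shortest subpath of $D$ starting at $h$ with $|(he)_2|=\sum_{h'\in(he)_1}S_1(h')$; if no such subpath exists, $\operatorname{sh}(h;S_1)=D_2$. For $v\in D_2$, $\operatorname{sh}(v;S_2)=(ev)_1$ where $ev$ is the shortest subpath of $D$ ending at $v$ with $|(ev)_1|=\sum_{v'\in(ev)_2}S_2(v')$; if no such subpath exists, $\operatorname{sh}(v;S_2)=D_1$. *)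

From mathcomp Require Import all_boot.

Set Implicit Arguments.
Unset Strict Implicit.
Unset Printing Implicit Defensive.

(* The maximal Dyck path D_{a1,a2}, encoded as its word of steps:
   true = East (horizontal) step, false = North (vertical) step.
   Lattice points (x,y) weakly below the diagonal satisfy a1*y <= a2*x; the
   highest such path takes, for x = 1..a1, one East step at height
   floor(a2(x-1)/a1) followed by North steps up to height floor(a2 x/a1). *)
Definition dyck_word (a1 a2 : nat) : seq bool :=
  if a1 == 0 then nseq a2 false
  else flatten [seq true :: nseq (a2 * x %/ a1 - a2 * x.-1 %/ a1) false
               | x <- iota 1 a1].

(* Edges of D are indexed by their position 'I_(a1+a2) along the path. *)
Definition is_hor {a1 a2 : nat} (e : 'I_(a1 + a2)) : bool :=
  nth false (dyck_word a1 a2) e.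

Definition D1 (a1 a2 : nat) : {set 'I_(a1 + a2)} := [set e | is_hor e].
Definition D2 (a1 a2 : nat) : {set 'I_(a1 + a2)} := [set e | ~~ is_hor e].

(* The cyclic subpath ee' (from e to e' inclusive, following D cyclically). *)
Definition subpath {a1 a2 : nat} (e e' : 'I_(a1 + a2)) : {set 'I_(a1 + a2)} :=
  [set i : 'I_(a1 + a2) | (i + (a1 + a2) - e) %% (a1 + a2)
                          <= (e' + (a1 + a2) - e) %% (a1 + a2)].

Definition hcond {a1 a2 : nat} (S1 : 'I_(a1 + a2) -> nat) (h e : 'I_(a1 + a2)) : bool :=
  #|subpath h e :&: D2 a1 a2| == \sum_(i in subpath h e :&: D1 a1 a2) S1 i.

Definition sh1 {a1 a2 : nat} (S1 : 'I_(a1 + a2) -> nat) (h : 'I_(a1 + a2))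
  : {set 'I_(a1 + a2)} :=
  if [pick e | hcond S1 h e] is Some e0 then
    subpath h [arg min_(e < e0 | hcond S1 h e) #|subpath h e|] :&: D2 a1 a2
  else D2 a1 a2.

Definition vcond {a1 a2 : nat} (S2 : 'I_(a1 + a2) -> nat) (v e : 'I_(a1 + a2)) : bool :=
  #|subpath e v :&: D1 a1 a2| == \sum_(i in subpath e v :&: D2 a1 a2) S2 i.

Definition sh2 {a1 a2 : nat} (S2 : 'I_(a1 + a2) -> nat) (v : 'I_(a1 + a2))
  : {set 'I_(a1 + a2)} :=
  if [pick e | vcond S2 v e] is Some e0 then
    subpath [arg min_(e < e0 | vcond S2 v e) #|subpath e v|] v :&: D1 a1 a2
  else D1 a1 a2.

From mathcomp Require Import all_boot zify.

Set Implicit Arguments.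
Unset Strict Implicit.
Unset Printing Implicit Defensive.

(* Only the cyclic structure of D matters.  A shadow is cut out by the shortest
   arc starting at its edge x (read backwards along D for vertical edges) on
   which the number of edges of the other kind equals the S-weight of the edges
   of x's kind.  Before that first balance point the weight strictly exceeds the
   count: on the arc {x} the count is 0, and each further step adds at most one
   to the count and does not decrease the weight.  So if the minimal arc of x
   contains x', splitting it at x' shows that the minimal arc of x' cannot run
   past its end, and the shadows are nested; if neither minimal arc contains
   the other's starting edge, the two arcs are disjoint. *)

Section CyclicDistance.

Variable n : nat.
Implicit Types x y i : 'I_n.

Definition cdist x i : nat := (i + n - x) %% n.

Lemma cdistE x i : cdist x i = if x <= i then i - x else i + n - x.
Proof.
have := ltn_ord x; have := ltn_ord i; rewrite /cdist; case: (leqP x i) => xi ilt xlt.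
  by rewrite -addnBAC // modnDr modn_small //; lia.
by rewrite modn_small //; lia.
Qed.

Lemma cdist_lt x i : cdist x i < n.
Proof. by have := ltn_ord x; have := ltn_ord i; rewrite cdistE; case: (leqP x i); lia. Qed.

Lemma cdistxx x : cdist x x = 0.
Proof. by rewrite cdistE leqnn subnn. Qed.

Lemma cdist_inj x : injective (cdist x).
Proof.
move=> i j; have := ltn_ord x; have := ltn_ord i; have := ltn_ord j.
by rewrite !cdistE; case: (leqP x i); case: (leqP x j) => *; apply: ord_inj; lia.
Qed.

Lemma cdist_onto x k : k < n -> exists i, cdist x i = k.
Proof.
move=> kn; have := ltn_ord x; case: (ltnP (x + k) n) => xk xn.
  by exists (Ordinal xk); rewrite cdistE /= leq_addr; lia.
have xkn : x + k - n < n by lia.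
by exists (Ordinal xkn); rewrite cdistE /=; case: leqP; lia.
Qed.

Lemma cdist_shift x y i : cdist y i =
  if cdist x y <= cdist x i then cdist x i - cdist x y else cdist x i + n - cdist x y.
Proof.
move: (ltn_ord x) (ltn_ord y) (ltn_ord i) => xn yn iin.
rewrite !cdistE; case: (leqP x y); case: (leqP x i); case: (leqP y i) => ? ? ?;
by case: leqP; lia.
Qed.

Lemma cdist_rev x i : cdist (rev_ord x) (rev_ord i) = cdist i x.
Proof.
move: (ltn_ord x) (ltn_ord i) => xn iin.
by rewrite !cdistE /=; case: (leqP i x) => ?; case: leqP; lia.
Qed.

Lemma cdist_arcC x i y : (cdist x i <= cdist x y) = (cdist i y <= cdist x y).
Proof.
rewrite (cdist_shift x i y); have := cdist_lt x i.
case: (leqP (cdist x i) (cdist x y)) => [_ _|yi ilt]; first by rewrite leq_subr.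
by apply/esym/negbTE; rewrite -ltnNge; lia.
Qed.

End CyclicDistance.

Lemma disjoint_setI2r (T : finType) (A B C : {set T}) :
  [disjoint A & B] -> [disjoint A :&: C & B :&: C].
Proof. by move/(disjointWr (subsetIl B C)); apply: disjointWl (subsetIl A C). Qed.

Lemma cardsUI_disjoint (T : finType) (A B C : {set T}) :
  [disjoint A & B] -> #|(A :|: B) :&: C| = #|A :&: C| + #|B :&: C|.
Proof.
move=> /(disjoint_setI2r C) dABC.
by rewrite setIUl cardsU (disjoint_setI0 dABC) cards0 subn0.
Qed.

Section LocalShadow.

(* Arcs follow the cyclic order in which pos lists 'I_n; pos := rev_ord walks
   D backwards. *)
Variables (n : nat) (pos : 'I_n -> 'I_n).
Hypothesis pos_inj : injective pos.

Let d x i := cdist (pos x) (pos i).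

Let d_lt x i : d x i < n.
Proof. exact: cdist_lt. Qed.

Let dxx x : d x x = 0.
Proof. exact: cdistxx. Qed.

Let d_shift x y i :
  d y i = if d x y <= d x i then d x i - d x y else d x i + n - d x y.
Proof. exact: cdist_shift. Qed.

Let d_inj x : injective (d x).
Proof. by move=> i j /cdist_inj /pos_inj. Qed.

Let d_onto x k : k < n -> exists i, d x i = k.
Proof.
move=> /(cdist_onto (pos x)) [j <-].
by exists (invF pos_inj j); rewrite /d f_invF.
Qed.

Definition arc x k : {set 'I_n} := [set i | d x i <= k].

Lemma arc0 x : arc x 0 = [set x].
Proof.
apply/setP => i; rewrite !inE leqn0.
apply/eqP/eqP => [dxi|->]; last exact: dxx.
by apply: (@d_inj x); rewrite dxi dxx.
Qed.

Lemma subset_arc x k k' : k <= k' -> arc x k \subset arc x k'.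
Proof. by move=> kk'; apply/subsetP => i; rewrite !inE => /leq_trans; apply. Qed.

Lemma arcS x k : k.+1 < n -> exists i, arc x k.+1 = i |: arc x k.
Proof.
move=> /(d_onto x) [i0 di0]; exists i0; apply/setP => i; rewrite !inE.
by rewrite leq_eqVlt ltnS -di0 (inj_eq (@d_inj x)).
Qed.

Variables (X Y : {set 'I_n}) (S : 'I_n -> nat).
Hypothesis XY_disjoint : [disjoint X & Y].
Implicit Types A B : {set 'I_n}.

Definition weight A : nat := \sum_(i in A :&: Y) S i.

Definition balanced A : bool := #|A :&: X| == weight A.

Lemma weightU A B : [disjoint A & B] -> weight (A :|: B) = weight A + weight B.
Proof.
move=> /(disjoint_setI2r Y) dAB; rewrite /weight -bigU //=.
by apply: eq_bigl => i; rewrite !inE andb_orl.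
Qed.

Lemma subset_leq_weight A B : A \subset B -> weight A <= weight B.
Proof.
move=> AB; rewrite /weight [leqRHS](big_setID (A :&: Y)) /=.
by rewrite (setIidPr (setSI Y AB)) leq_addr.
Qed.

Lemma card_lt_weight_before_balance x K : x \in Y -> K < n ->
  (forall k, k <= K -> ~~ balanced (arc x k)) -> #|arc x K :&: X| < weight (arc x K).
Proof.
move=> xY; elim: K => [_|K IH Kn] unbal.
  have cX0 : #|arc x 0 :&: X| = 0.
    apply/eqP; rewrite arc0 cards_eq0; apply/eqP/setP => i; rewrite !inE.
    by case: eqP => // ->; rewrite (disjointFl XY_disjoint xY).
  by move: (unbal 0 (leqnn 0)); rewrite /balanced cX0 lt0n eq_sym.
have deficitK := IH (ltnW Kn) (fun k kK => unbal k (leqW kK)).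
move: (unbal _ (leqnn K.+1)); have [i0 ->] := arcS x Kn.
rewrite /balanced ltn_neqAle => -> /=.
have cardS : #|(i0 |: arc x K) :&: X| <= #|arc x K :&: X|.+1.
  apply: leq_trans (_ : #|i0 |: (arc x K :&: X)| <= _).
    by apply: subset_leq_card; rewrite setIUl setSU // subsetIl.
  by rewrite cardsU1 -add1n leq_add2r leq_b1.
by apply: leq_trans cardS (leq_trans deficitK (subset_leq_weight (subsetUr _ _))).
Qed.

Lemma arc_split x x' m : 0 < d x x' -> d x x' <= m -> m < n ->
  arc x m = arc x (d x x').-1 :|: arc x' (m - d x x').
Proof.
move=> p_pos pm mn; apply/setP => i; rewrite !inE (d_shift x x' i).
by case: (leqP (d x x') (d x i)) => ?; apply/idP/orP; lia.
Qed.

Lemma arc_split_disjoint x x' m : 0 < d x x' -> m < n ->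
  [disjoint arc x (d x x').-1 & arc x' (m - d x x')].
Proof.
move=> p_pos mn; rewrite -setI_eq0; apply/eqP/setP => i.
have := d_lt x x'; rewrite !inE (d_shift x x' i) => ?; apply/negbTE/andP => -[].
by case: (leqP (d x x') (d x i)); lia.
Qed.

Lemma arcs_disjoint x x' m m' : m < d x x' -> m' < d x' x ->
  [disjoint arc x m & arc x' m'].
Proof.
move=> x'_out x_out; rewrite -setI_eq0; apply/eqP/setP => i.
have := d_lt x x'; move: x_out; rewrite !inE (d_shift x x' i) (d_shift x x' x) dxx.
case: (leqP (d x x') 0); case: (leqP (d x x') (d x i)) => *.
all: by apply/negbTE/andP => -[]; lia.
Qed.

Definition first_balanced x m :=
  [/\ m < n, balanced (arc x m) & forall k, k < m -> ~~ balanced (arc x k)].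

Lemma first_balanced_nested x x' m m' : x \in Y -> x' \in Y ->
  first_balanced x m -> first_balanced x' m' -> d x x' <= m ->
  arc x' m' \subset arc x m.
Proof.
move=> xY x'Y [mn bal_m before_m] [_ bal_m' before_m'] pm.
suff m'_le : m' <= m - d x x'.
  apply/subsetP => i; rewrite !inE (d_shift x x' i).
  by case: (leqP (d x x') (d x i)); lia.
rewrite leqNgt; apply/negP => m'_gt.
have deficit' : #|arc x' (m - d x x') :&: X| < weight (arc x' (m - d x x')).
  by apply: card_lt_weight_before_balance => // [|k km]; [lia | apply: before_m'; lia].
have [p0|p_pos] := posnP (d x x').
  have x'x : x' = x by apply: (@d_inj x); rewrite dxx.
  by move: deficit'; rewrite p0 subn0 x'x (eqP bal_m) ltnn.
have deficit : #|arc x (d x x').-1 :&: X| < weight (arc x (d x x').-1).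
  by apply: card_lt_weight_before_balance => // [|k kp]; [lia | apply: before_m; lia].
move/eqP: bal_m; rewrite (arc_split p_pos pm mn).
by rewrite cardsUI_disjoint ?weightU ?arc_split_disjoint //; lia.
Qed.

Variable segment : 'I_n -> 'I_n -> {set 'I_n}.
Hypothesis segmentE : forall x e, segment x e = arc x (d x e).

Definition shadow x : {set 'I_n} :=
  if [pick e | balanced (segment x e)] is Some e0 then
    segment x [arg min_(e < e0 | balanced (segment x e)) #|segment x e|] :&: X
  else X.

Lemma shadowP x :
  shadow x = X \/ exists2 m, first_balanced x m & shadow x = arc x m :&: X.
Proof.
rewrite /shadow; case: pickP => [e0 bal_e0 | _]; last by left.
case: arg_minnP => // e bal_e min_e; right; exists (d x e); last by rewrite segmentE.
split; [exact: d_lt | by rewrite -segmentE | move=> k k_lt; apply/negP => bal_k].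
have [e' de'] := d_onto x (ltn_trans k_lt (d_lt x e)).
have := min_e e'; rewrite !segmentE de' => /(_ bal_k); apply/negP; rewrite -ltnNge.
apply: proper_card; apply/properP; split; first exact: subset_arc (ltnW k_lt).
by exists e; rewrite !inE // -ltnNge.
Qed.

Theorem shadow_laminar x x' : x \in Y -> x' \in Y ->
  [disjoint shadow x & shadow x'] \/
  shadow x \subset shadow x' \/ shadow x' \subset shadow x.
Proof.
move=> xY x'Y.
have shadow_sub z : shadow z \subset X.
  by case: (shadowP z) => [->|[m _ ->]]; rewrite ?subsetIr.
case: (shadowP x) => [->|[m fb_m ->]]; first by right; right.
case: (shadowP x') => [->|[m' fb_m' ->]]; first by right; left; exact: subsetIr.
case: (leqP (d x x') m) => [x'_in|x'_out].
  by right; right; apply/setSI/first_balanced_nested.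
case: (leqP (d x' x) m') => [x_in|x_out].
  by right; left; apply/setSI/first_balanced_nested.
by left; apply/disjoint_setI2r/arcs_disjoint.
Qed.

End LocalShadow.

Lemma disjoint_D2_D1 a1 a2 : [disjoint D2 a1 a2 & D1 a1 a2].
Proof. by rewrite -setI_eq0; apply/eqP/setP => i; rewrite !inE andNb. Qed.

Lemma subpath_rev a1 a2 (e v : 'I_(a1 + a2)) :
  subpath e v = arc (@rev_ord _) v (cdist (rev_ord v) (rev_ord e)).
Proof. by apply/setP => i; rewrite !inE !cdist_rev; exact: cdist_arcC. Qed.

Theorem lemma4p10 (a1 a2 : nat) :
  (forall (S1 : 'I_(a1 + a2) -> nat) (h h' : 'I_(a1 + a2)),
      h \in D1 a1 a2 -> h' \in D1 a1 a2 ->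
      [disjoint sh1 S1 h & sh1 S1 h'] \/
      sh1 S1 h \subset sh1 S1 h' \/ sh1 S1 h' \subset sh1 S1 h) /\
  (forall (S2 : 'I_(a1 + a2) -> nat) (v v' : 'I_(a1 + a2)),
      v \in D2 a1 a2 -> v' \in D2 a1 a2 ->
      [disjoint sh2 S2 v & sh2 S2 v'] \/
      sh2 S2 v \subset sh2 S2 v' \/ sh2 S2 v' \subset sh2 S2 v).
Proof.
split=> [S1 h h' hD1 h'D1 | S2 v v' vD2 v'D2].
  exact (@shadow_laminar _ id (@inj_id _) _ _ S1 (disjoint_D2_D1 a1 a2) subpath
            (fun _ _ => erefl) h h' hD1 h'D1).
have D1_D2 : [disjoint D1 a1 a2 & D2 a1 a2] by rewrite disjoint_sym disjoint_D2_D1.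
exact (@shadow_laminar _ (@rev_ord _) rev_ord_inj _ _ S2 D1_D2 (fun v e => subpath e v)
          (fun v e => subpath_rev e v) v v' vD2 v'D2).
Qed.
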